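(* Let $p$ be a prime, $n\ge1$, $\zeta=\zeta_{p^n}$ a primitive $p^n$th root of unity, $T=\mathbb{Z}_{(p)}[\zeta]$, $t=1-\zeta$ with valuation $v_t$. Then the tuple $\tau=(1-\zeta^j)_{j\in[0,p^n-1],\,p\nmid j}$, with $j$ in increasing order, is minimally ordered.
   Context: A tuple $(\xi_0,\dots,\xi_{r-1})$ of pairwise distinct elements of $T$ is minimally ordered if $\sum_{i\in[0,j-1]}v_t(\xi_j-\xi_i)\le\sum_{i\in[0,j-1]}v_t(\xi_k-\xi_i)$ for all $j\in[0,r-1]$ and $k\in[j+1,r-1]$. *)

From HB Require Import structures.
From mathcomp Require Import all_boot all_order all_algebra all_field.
From Stdlib Require Import ClassicalEpsilon.
Set Implicit Arguments. Unset Strict Implicit. Unset Printing Implicit Defensive.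
Import Order.TTheory GRing.Theory Num.Theory.
Local Open Scope ring_scope.

Definition in_Zp_loc (p : nat) (x : algC) : Prop :=
  exists (a : int) (b : nat), ~~ (p %| b)%N /\ x = a%:~R / b%:R.

Definition in_T (p : nat) (zeta x : algC) : Prop :=
  exists q : {poly algC}, (forall i, in_Zp_loc p q`_i) /\ x = q.[zeta].

Definition dvd_T (p : nat) (zeta d x : algC) : Prop :=
  exists y, in_T p zeta y /\ x = d * y.

(* t-adic valuation v_t on T, t = 1 - zeta: the k with t^k | x and not t^(k+1) | x
   (meaningful for nonzero x in T). *)
Definition v_t (p : nat) (zeta x : algC) : nat :=
  epsilon (inhabits 0%N)
    (fun k => dvd_T p zeta ((1 - zeta) ^+ k) x /\
              ~ dvd_T p zeta ((1 - zeta) ^+ k.+1) x).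

Definition minimally_ordered (p : nat) (zeta : algC) (xi : seq algC) : Prop :=
  [/\ uniq xi,
      (forall i, (i < size xi)%N -> in_T p zeta xi`_i) &
      forall j k, (j < k)%N -> (k < size xi)%N ->
        (\sum_(i < j) v_t p zeta (xi`_j - xi`_i)%R <=
         \sum_(i < j) v_t p zeta (xi`_k - xi`_i)%R)%N].

Definition tau (p n : nat) (zeta : algC) : seq algC :=
  [seq 1 - zeta ^+ j | j <- [seq j <- iota 0 (p ^ n) | ~~ (p %| j)%N]].

From mathcomp Require Import all_boot all_order all_algebra all_field.
From Stdlib Require Import ClassicalEpsilon.
From mathcomp Require Import ring.
Set Implicit Arguments. Unset Strict Implicit. Unset Printing Implicit Defensive.
Import Order.TTheory GRing.Theory Num.Theory.

(* Write [t = 1 - zeta] and [a_0 < a_1 < ...] for the exponents below [p^n] prime to [p].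
   In [T], [1 - zeta^c] is an associate of [t] whenever [p] does not divide [c]; factoring
   [X^(p^e) - 1] then shows that [1 - zeta^m] is an associate of [t^(p^(v_p m))] for
   [0 < m < p^n], and that [p] is an associate of a power of [t].  Since [1/p] is not in [T]
   (elements of [T] are algebraic integers up to denominators prime to [p]), [t] is not a
   unit, so [v_t(tau_k - tau_i) = p^(v_p(a_k - a_i))].  Writing [p^(v_p d)] as the sum of
   [phi(p^s)] over the [p^s] dividing [d], the inequality reduces to counting: for [s > 0],
   exactly [a_j / p^s] of the [y < a_j] are congruent to [a_j] mod [p^s], and at least as
   many are congruent to [a_k]. *)

Section ResidueCount.
Variables (M r : nat).
Hypotheses (M_gt0 : 0 < M) (lt_rM : r < M).
Local Notation in_class := (fun y => y %% M == r).

Lemma count_mod_iota_block a s : s <= M -> count in_class (iota (a * M) s) = (r < s).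
Proof.
move=> le_sM; rewrite -[a * M]addn0 iotaDl count_map.
rewrite (@eq_in_count _ _ (pred1 r)); last first.
  by move=> y; rewrite mem_iota add0n => lt_ys /=; rewrite modnMDl modn_small // (leq_trans lt_ys).
by rewrite count_uniq_mem ?iota_uniq // mem_iota.
Qed.

Lemma count_mod_iota x : count in_class (iota 0 x) = x %/ M + (r < x %% M).
Proof.
rewrite {1}(divn_eq x M) iotaD count_cat add0n count_mod_iota_block ?(ltnW (ltn_pmod x M_gt0)) //.
congr (_ + _); elim: (x %/ M) => [|q IHq]; first by rewrite mul0n.
by rewrite mulSnr iotaD count_cat IHq add0n count_mod_iota_block // lt_rM addn1.
Qed.

End ResidueCount.

Lemma sum_totient_pfactor p L : prime p -> \sum_(s < L.+1) totient (p ^ s) = p ^ L.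
Proof.
move=> p_pr; elim: L => [|L IHL]; first by rewrite big_ord1.
by rewrite big_ord_recr /= IHL totient_pfactor //= -mulSn prednK ?prime_gt0 -?expnS.
Qed.

Lemma pfactor_logn_sum_totient p d B : prime p -> 0 < d -> logn p d < B ->
  p ^ logn p d = \sum_(s < B) totient (p ^ s) * (p ^ s %| d).
Proof.
move=> p_pr d_gt0 lt_dB; rewrite -sum_totient_pfactor //.
rewrite (big_ord_widen B (fun s => totient (p ^ s)) lt_dB) big_mkcond /=.
by apply: eq_bigr => s _; rewrite pfactor_dvdn // ltnS; case: leqP; rewrite ?muln1 ?muln0.
Qed.

Section CoprimeDifferences.
Variables (p x : nat).
Hypothesis p_pr : prime p.
Local Notation U := [seq y <- iota 0 x | ~~ (p %| y)].

Lemma count_dvd_sub_coprime c s : x <= c -> ~~ (p %| c) -> 0 < s ->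
  count (fun y => p ^ s %| c - y) U = count (fun y => y %% p ^ s == c %% p ^ s) (iota 0 x).
Proof.
move=> le_xc pc s_gt0; rewrite count_filter; apply: eq_in_count => y.
rewrite mem_iota add0n /= => lt_yx; have le_yc : y <= c by rewrite ltnW ?(leq_trans lt_yx).
rewrite -eqn_mod_dvd // eq_sym; case: (y == c %[mod p ^ s]) / eqP => //= yc.
apply/negP => py; have p_dvd_cy : p %| c - y.
  by apply: dvdn_trans (dvdn_exp s_gt0 (dvdnn p)) _; rewrite -eqn_mod_dvd // yc.
by move: pc; rewrite -(subnK le_yc) dvdn_add.
Qed.

Lemma sum_logn_sub_count c z : x <= c <= z -> ~~ (p %| c) ->
  \sum_(y <- U) p ^ logn p (c - y) =
  \sum_(s < z) totient (p ^ s) * count (fun y => p ^ s %| c - y) U.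
Proof.
move=> /andP [le_xc le_cz] pc.
rewrite (eq_big_seq (fun y => \sum_(s < z) totient (p ^ s) * (p ^ s %| c - y))); last first.
  move=> y; rewrite mem_filter mem_iota add0n => /andP [_ lt_yx].
  have d_gt0 : 0 < c - y by rewrite subn_gt0 (leq_trans lt_yx).
  apply: pfactor_logn_sum_totient => //; apply: leq_trans (ltn_logl _ d_gt0) _.
  exact: leq_trans (leq_subr _ _) le_cz.
rewrite exchange_big; apply: eq_bigr => s _.
by rewrite -big_distrr /= -sumn_count sumnE big_map.
Qed.

Lemma sum_pfactor_logn_sub_le z : x < z -> ~~ (p %| x) -> ~~ (p %| z) ->
  \sum_(y <- U) p ^ logn p (x - y) <= \sum_(y <- U) p ^ logn p (z - y).
Proof.
move=> lt_xz px pz; rewrite !(sum_logn_sub_count (z := z)) ?leqnn ?(ltnW lt_xz) //.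
apply: leq_sum => -[[|s] _] _ /=; rewrite leq_mul2l; apply/orP; right.
  by apply: eq_leq; apply: eq_count => y; rewrite expn0 !dvd1n.
have pfactor_gt0 : 0 < p ^ s.+1 by rewrite expn_gt0 prime_gt0.
rewrite !count_dvd_sub_coprime ?(ltnW lt_xz) //.
by rewrite !count_mod_iota ?ltn_pmod // ltnn addn0 leq_addr.
Qed.

End CoprimeDifferences.

Lemma take_filter_iota (P : pred nat) N j : j < size [seq y <- iota 0 N | P y] ->
  take j [seq y <- iota 0 N | P y] = [seq y <- iota 0 (nth 0 [seq y <- iota 0 N | P y] j) | P y].
Proof.
set a := [seq y <- _ | _] => lt_ja; set x := nth 0 a j.
have /[!(mem_filter, mem_iota)] /andP [Px lt_xN] : x \in a by exact: mem_nth.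
have a_split : a = [seq y <- iota 0 x | P y] ++ x :: [seq y <- iota x.+1 (N - x.+1) | P y].
  rewrite /a -[N in iota 0 N](subnKC (ltnW lt_xN)) -(subnSK lt_xN) iotaD.
  by rewrite filter_cat /= Px.
have x_notin : x \notin [seq y <- iota 0 x | P y] by rewrite mem_filter mem_iota add0n ltnn !andbF.
have : index x a = j by rewrite index_uniq // filter_uniq ?iota_uniq.
rewrite {1}a_split index_cat (negPf x_notin) /= eqxx addn0 => <-.
by rewrite {1}a_split take_size_cat.
Qed.

Lemma sum_take_nth (F : nat -> nat) s j : j <= size s ->
  \sum_(i < j) F (nth 0 s i) = \sum_(y <- take j s) F y.
Proof.
move=> le_js; rewrite (big_nth 0) size_takel // big_mkord.
by apply: eq_bigr => i _; rewrite nth_take.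
Qed.

Local Open Scope ring_scope.

Lemma ndvdn_natr_neq0 {R : numDomainType} (p b : nat) : ~~ (p %| b)%N -> b%:R != 0 :> R.
Proof. by rewrite pnatr_eq0; apply: contraNneq => ->; rewrite dvdn0. Qed.

Lemma prim_root_factor_subX1 (F : fieldType) (N : nat) (w x : F) : N.-primitive_root w ->
  x ^+ N - 1 = \prod_(0 <= i < N) (x - w ^+ i).
Proof.
move=> /factor_Xn_sub_1 /(congr1 (horner^~ x)); rewrite horner_prod !hornerE => <-.
by apply: eq_bigr => i _; rewrite hornerXsubC.
Qed.

Lemma prim_root_prod_1subX (F : fieldType) (N : nat) (w : F) : (0 < N)%N -> N.-primitive_root w ->
  N%:R = \prod_(1 <= i < N) (1 - w ^+ i).
Proof.
move=> N_gt0 /factor_Xn_sub_1; rewrite big_ltn // expr0 subrX1 => /mulfI.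
rewrite polyXsubC_eq0 => /(_ isT) /(congr1 (horner^~ 1)).
rewrite horner_prod horner_sum => prod_eq_sum.
rewrite -[in LHS](card_ord N) -sumr_const.
transitivity (\sum_(i < N) ('X^i).[1] : F).
  by apply: eq_bigr => i _; rewrite hornerXn expr1n.
by rewrite -prod_eq_sum; apply: eq_bigr => i _; rewrite hornerXsubC.
Qed.

Section LocalizedIntegers.
Variable p : nat.
Hypothesis p_pr : prime p.

Lemma Zp_loc_int (a : int) : in_Zp_loc p a%:~R.
Proof. by exists a, 1%N; rewrite divr1 dvdn1 neq_ltn prime_gt1 ?orbT. Qed.

Lemma Zp_loc_add x y : in_Zp_loc p x -> in_Zp_loc p y -> in_Zp_loc p (x + y).
Proof.
move=> [a [b [pb ->]]] [c [d [pd ->]]].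
exists (a * d%:Z + c * b%:Z), (b * d)%N; split; first by rewrite Euclid_dvdM // negb_or pb pd.
rewrite natrM rmorphD !rmorphM /= !pmulrn; field.
by rewrite (ndvdn_natr_neq0 pb) (ndvdn_natr_neq0 pd).
Qed.

Lemma Zp_loc_mul x y : in_Zp_loc p x -> in_Zp_loc p y -> in_Zp_loc p (x * y).
Proof.
move=> [a [b [pb ->]]] [c [d [pd ->]]].
exists (a * c), (b * d)%N; split; first by rewrite Euclid_dvdM // negb_or pb pd.
rewrite natrM !rmorphM /=; field.
by rewrite (ndvdn_natr_neq0 pb) (ndvdn_natr_neq0 pd).
Qed.

Lemma Zp_loc_sum (I : Type) (r : seq I) (P : pred I) (F : I -> algC) :
  (forall i, P i -> in_Zp_loc p (F i)) -> in_Zp_loc p (\sum_(i <- r | P i) F i).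
Proof. by apply: big_ind; [exact: (Zp_loc_int 0) | exact: Zp_loc_add]. Qed.

End LocalizedIntegers.

Section LocalizedCyclotomicRing.
Variables (p : nat) (zeta : algC).
Hypothesis p_pr : prime p.
Local Notation T := (in_T p zeta).

Lemma in_T_Zp_loc c : in_Zp_loc p c -> T c.
Proof.
exists c%:P; split; last by rewrite hornerC.
by move=> i; rewrite coefC; case: eqP => // _; exact: (Zp_loc_int p_pr 0).
Qed.

Lemma in_T_int (a : int) : T a%:~R.
Proof. exact/in_T_Zp_loc/Zp_loc_int. Qed.

Lemma in_T0 : T 0. Proof. exact: (in_T_int 0). Qed.

Lemma in_T1 : T 1. Proof. exact: (in_T_int 1). Qed.

Lemma in_T_zeta : T zeta.
Proof.
exists 'X; split; last by rewrite hornerX.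
move=> i; rewrite coefX; case: eqP => _.
  exact: (Zp_loc_int p_pr 1).
exact: (Zp_loc_int p_pr 0).
Qed.

Lemma in_T_add x y : T x -> T y -> T (x + y).
Proof.
move=> [q [hq ->]] [r [hr ->]]; exists (q + r); split; last by rewrite hornerD.
by move=> i; rewrite coefD; exact: Zp_loc_add.
Qed.

Lemma in_T_mul x y : T x -> T y -> T (x * y).
Proof.
move=> [q [hq ->]] [r [hr ->]]; exists (q * r); split; last by rewrite hornerM.
by move=> i; rewrite coefM; apply: Zp_loc_sum => // j _; exact: Zp_loc_mul.
Qed.

Lemma in_T_opp x : T x -> T (- x).
Proof. by rewrite -mulN1r; apply: in_T_mul; exact: (in_T_int (-1)). Qed.

Lemma in_T_sub x y : T x -> T y -> T (x - y).
Proof. by move=> Tx Ty; apply/in_T_add/in_T_opp. Qed.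

Lemma in_T_exp x k : T x -> T (x ^+ k).
Proof. by move=> Tx; elim: k => [|k IHk]; [exact: in_T1 | rewrite exprS; exact: in_T_mul]. Qed.

Lemma in_T_sum (I : Type) (r : seq I) (P : pred I) (F : I -> algC) :
  (forall i, P i -> T (F i)) -> T (\sum_(i <- r | P i) F i).
Proof. by apply: big_ind; [exact: in_T0 | exact: in_T_add]. Qed.

Lemma in_T_Aint_scale x : zeta \in Aint -> T x ->
  exists2 d : nat, ~~ (p %| d)%N & d%:R * x \in Aint.
Proof.
move=> Azeta [q [hq ->]]; rewrite horner_coef.
apply: (big_ind (fun y => exists2 d : nat, ~~ (p %| d)%N & d%:R * y \in Aint)).
- by exists 1%N; rewrite ?mulr0 ?rpred0 // dvdn1 neq_ltn prime_gt1 ?orbT.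
- move=> y1 y2 [d1 pd1 A1] [d2 pd2 A2]; exists (d1 * d2)%N.
    by rewrite Euclid_dvdM // negb_or pd1 pd2.
  have -> : (d1 * d2)%:R * (y1 + y2) = d2%:R * (d1%:R * y1) + d1%:R * (d2%:R * y2).
    by rewrite natrM; ring.
  by rewrite rpredD // rpredM // rpred_nat.
move=> i _; have [a [b [pb ->]]] := hq i; exists b => //.
rewrite mulrA mulrCA divff ?mulr1 ?(ndvdn_natr_neq0 pb) //.
by rewrite rpredM ?rpredX ?Aint_int.
Qed.

(* [1/p] is rational, so an integral multiple [d/p] would be a rational integer. *)
Lemma in_T_invp : zeta \in Aint -> ~ T p%:R^-1.
Proof.
move=> Azeta /(in_T_Aint_scale Azeta) [d pd Ad].
have p_neq0 : p%:R != 0 :> algC by rewrite pnatr_eq0 -lt0n prime_gt0.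
have /intrP [m dm] := Cint_rat_Aint (rpred_div (rpred_nat _ d) (rpred_nat _ p)) Ad.
have : d%:R = (p%:Z * m)%:~R :> algC by rewrite rmorphM /= -dm pmulrn mulrCA divff ?mulr1.
rewrite pmulrn => /intr_inj /(congr1 absz); rewrite abszM /= => d_eq.
by move: pd; rewrite d_eq dvdn_mulr.
Qed.

Definition assoc_T x y := exists U V, [/\ T U, T V, x = y * U & y = x * V].
Local Notation assoc := assoc_T.

Lemma assoc_T_refl x : assoc x x.
Proof. by exists 1, 1; split; rewrite ?mulr1 //; exact: in_T1. Qed.

Lemma assoc_T_trans x y w : assoc x y -> assoc y w -> assoc x w.
Proof.
move=> [U [V [TU TV xU yV]]] [U' [V' [TU' TV' yU' wV']]].
exists (U' * U), (V * V'); split; try exact: in_T_mul.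
  by rewrite xU yU' mulrA.
by rewrite wV' yV mulrA.
Qed.

Lemma assoc_T_mul x y x' y' : assoc x y -> assoc x' y' -> assoc (x * x') (y * y').
Proof.
move=> [U [V [TU TV xU yV]]] [U' [V' [TU' TV' xU' yV']]].
exists (U * U'), (V * V'); split; try exact: in_T_mul.
  by rewrite xU xU' mulrACA.
by rewrite yV yV' mulrACA.
Qed.

Lemma assoc_T_prod (I : Type) (r : seq I) (P : pred I) (F G : I -> algC) :
  (forall i, P i -> assoc (F i) (G i)) ->
  assoc (\prod_(i <- r | P i) F i) (\prod_(i <- r | P i) G i).
Proof. by apply: (big_ind2 assoc); [exact: assoc_T_refl | exact: assoc_T_mul]. Qed.

Lemma assoc_T_unitl u v x : T u -> T v -> u * v = 1 -> assoc (u * x) x.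
Proof.
by move=> Tu Tv uv; exists u, v; split => //; [exact: mulrC | rewrite mulrAC uv mul1r].
Qed.

Lemma assoc_T_opp x : assoc (- x) x.
Proof.
have Tm1 : T (-1) by apply/in_T_opp/in_T1.
by rewrite -mulN1r; apply: (assoc_T_unitl _ Tm1 Tm1); rewrite mulN1r opprK.
Qed.

Lemma assoc_T_1subX w M u : T w -> (0 < M)%N -> M.-primitive_root w -> coprime u M ->
  assoc (1 - w ^+ u) (1 - w).
Proof.
move=> Tw M_gt0 w_prim uM.
have geometric y k : 1 - y ^+ k = (1 - y) * \sum_(i < k) y ^+ i.
  by rewrite -opprB subrX1 -mulNr opprB.
have wu_prim : M.-primitive_root (w ^+ u) by rewrite prim_root_exp_coprime.
have [i w_eq] := prim_rootP wu_prim (prim_expr_order w_prim).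
exists (\sum_(j < u) w ^+ j), (\sum_(j < i) (w ^+ u) ^+ j); split.
- by apply: in_T_sum => j _; exact: in_T_exp.
- by apply: in_T_sum => j _; do 2!apply: in_T_exp.
- exact: geometric.
by rewrite {1}w_eq geometric.
Qed.

Section Valuation.
Variable t : algC.
Hypotheses (Tt : T t) (t_neq0 : t != 0) (t_nonunit : forall y, T y -> t * y != 1).

Lemma dvd_T_expr_assoc x k j : assoc x (t ^+ k) -> dvd_T p zeta (t ^+ j) x <-> (j <= k)%N.
Proof.
move=> [U [V [TU TV xU tV]]]; split => [[y [Ty xy]] | jk].
  rewrite leqNgt; apply/negP => kj.
  have /negP : t * (t ^+ (j - k.+1) * y * V) != 1.
    by apply: t_nonunit; do 2?apply: in_T_mul => //; exact: in_T_exp.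
  apply; apply/eqP/(mulfI (expf_neq0 k t_neq0)).
  by rewrite mulr1 {2}tV xy !mulrA -exprSr -exprD subnKC.
exists (t ^+ (k - j) * U); split; first by apply: in_T_mul => //; exact: in_T_exp.
by rewrite xU mulrA -exprD subnKC.
Qed.

End Valuation.

Lemma v_t_assoc_expr x k :
  1 - zeta != 0 -> (forall y, T y -> (1 - zeta) * y != 1) ->
  assoc x ((1 - zeta) ^+ k) -> v_t p zeta x = k.
Proof.
move=> t_neq0 t_nonunit xk.
have Tt : T (1 - zeta) by apply: in_T_sub; [exact: in_T1 | exact: in_T_zeta].
have dvdE j := dvd_T_expr_assoc Tt t_neq0 t_nonunit j xk.
have /(epsilon_spec (inhabits 0%N)) [] : exists k', dvd_T p zeta ((1 - zeta) ^+ k') x /\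
    ~ dvd_T p zeta ((1 - zeta) ^+ k'.+1) x.
  by exists k; rewrite !dvdE ltnn.
rewrite -/(v_t p zeta x) !dvdE => le_vk lt_vk.
by apply/eqP; rewrite eqn_leq le_vk leqNgt; exact/negP.
Qed.

Section PrimitivePrimePowerRoot.
Variable n : nat.
Hypotheses (n_gt0 : (0 < n)%N) (zeta_prim : (p ^ n)%N.-primitive_root zeta).
Local Notation t := (1 - zeta).

Lemma pn_gt1 : (1 < p ^ n)%N.
Proof. by rewrite -{1}(expn0 p) ltn_exp2l ?prime_gt1. Qed.

Lemma in_T_zeta_exp k : T (zeta ^+ k).
Proof. exact/in_T_exp/in_T_zeta. Qed.

Lemma assoc_T_zeta_expl a x : assoc (zeta ^+ a * x) x.
Proof.
apply: (assoc_T_unitl _ (in_T_zeta_exp a) (in_T_zeta_exp (a * (p ^ n).-1))).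
rewrite -exprD addnC -mulnSr prednK ?(ltnW pn_gt1) // mulnC exprM.
by rewrite (prim_expr_order zeta_prim) expr1n.
Qed.

Lemma prim_root_pfactor e : (e <= n)%N -> (p ^ (n - e))%N.-primitive_root (zeta ^+ (p ^ e)).
Proof.
move=> le_en; have := dvdn_prim_root zeta_prim (dvdn_exp2l p (leq_subr e n)).
by rewrite -expnB ?prime_gt0 ?leq_subr // subKn.
Qed.

Lemma assoc_T_1subX_t c : ~~ (p %| c)%N -> assoc (1 - zeta ^+ c) t.
Proof.
move=> pc; have zeta1_prim : (p ^ n)%N.-primitive_root (zeta ^+ 1) by rewrite expr1.
have cpn : coprime c (p ^ n) by rewrite coprime_pexpr // coprime_sym prime_coprime.
by have := assoc_T_1subX (in_T_zeta_exp 1) (ltnW pn_gt1) zeta1_prim cpn; rewrite !expr1.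
Qed.

Lemma assoc_T_1subX_pfactor e : (e < n)%N -> assoc (1 - zeta ^+ (p ^ e)) (t ^+ (p ^ e)).
Proof.
move=> lt_en; set N := (p ^ e)%N; set M := (p ^ (n - e))%N.
have w_prim : N.-primitive_root (zeta ^+ M).
  by have := prim_root_pfactor (leq_subr e n); rewrite subKn // ltnW.
have factor_eq i : zeta - (zeta ^+ M) ^+ i = zeta * (1 - zeta ^+ ((p ^ n).-1 + i * M)).
  rewrite mulrBr mulr1 -exprS -addSn prednK ?(ltnW pn_gt1) //.
  by rewrite exprD (prim_expr_order zeta_prim) mul1r mulnC exprM.
have factor_ndvd i : ~~ (p %| (p ^ n).-1 + i * M)%N.
  apply/negP => p_dvd; have : (p %| ((p ^ n).-1 + i * M).+1)%N.
    by rewrite -addSn prednK ?(ltnW pn_gt1) // dvdn_add ?dvdn_mull // dvdn_exp // subn_gt0.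
  by rewrite -addn1 dvdn_addr // dvdn1 => /eqP p1; move: (prime_gt1 p_pr); rewrite p1.
rewrite -opprB (prim_root_factor_subX1 _ w_prim).
apply: assoc_T_trans (assoc_T_opp _) _.
have -> : t ^+ N = \prod_(0 <= i < N) t by rewrite prodr_const_nat subn0.
apply: assoc_T_prod => i _; rewrite factor_eq.
exact: assoc_T_trans (assoc_T_zeta_expl 1 _) (assoc_T_1subX_t (factor_ndvd i)).
Qed.

Lemma assoc_T_1subX_logn m : (0 < m)%N -> (m < p ^ n)%N ->
  assoc (1 - zeta ^+ m) (t ^+ (p ^ logn p m)).
Proof.
move=> m_gt0 lt_m_pn; have [u pu m_eq] := pfactor_coprime p_pr m_gt0.
set e := logn p m in m_eq *.
have lt_en : (e < n)%N.
  rewrite -(ltn_exp2l _ _ (prime_gt1 p_pr)) (leq_ltn_trans _ lt_m_pn) //.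
  by rewrite dvdn_leq ?pfactor_dvdnn.
apply: assoc_T_trans (assoc_T_1subX_pfactor lt_en).
rewrite m_eq mulnC exprM.
apply: assoc_T_1subX (in_T_zeta_exp _) _ (prim_root_pfactor (ltnW lt_en)) _.
  by rewrite expn_gt0 prime_gt0.
by rewrite coprime_pexpr ?subn_gt0 // coprime_sym.
Qed.

Lemma assoc_T_natr_p : assoc p%:R (t ^+ (p ^ (n - 1) * p.-1)).
Proof.
have lt_n1 : (n - 1 < n)%N by rewrite ltn_subrL n_gt0.
have w_prim : p.-primitive_root (zeta ^+ (p ^ (n - 1))).
  by have := prim_root_pfactor (ltnW lt_n1); rewrite subKn // expn1.
rewrite (prim_root_prod_1subX (prime_gt0 p_pr) w_prim) exprM -(subn1 p) -prodr_const_nat.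
rewrite !big_seq; apply: assoc_T_prod => i; rewrite mem_index_iota => /andP [i_gt0 lt_ip].
apply: assoc_T_trans (assoc_T_1subX_pfactor lt_n1).
apply: assoc_T_1subX (in_T_zeta_exp _) (prime_gt0 p_pr) w_prim _.
by rewrite coprime_sym prime_coprime // gtnNdvd.
Qed.

Lemma t_nonunit y : T y -> t * y != 1.
Proof.
move=> Ty; apply/eqP => ty1; set K := (p ^ (n - 1) * p.-1)%N.
have [_ [V [_ TV _ tV]]] := assoc_T_natr_p.
have p_neq0 : p%:R != 0 :> algC by rewrite pnatr_eq0 -lt0n prime_gt0.
apply: (in_T_invp (Aint_prim_root zeta_prim)).
have -> : p%:R^-1 = V * y ^+ K.
  by apply: (mulfI p_neq0); rewrite mulfV // mulrA -tV -exprMn ty1 expr1n.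
by apply: in_T_mul => //; exact: in_T_exp.
Qed.

Lemma t_neq0 : t != 0.
Proof.
rewrite subr_eq0 eq_sym -[zeta in zeta == _]expr1 -(expr0 zeta).
by rewrite (eq_prim_root_expr zeta_prim) mod0n modn_small ?pn_gt1.
Qed.

Lemma v_t_1subX_diff u w : (u < w)%N -> (w < p ^ n)%N ->
  v_t p zeta ((1 - zeta ^+ w) - (1 - zeta ^+ u)) = (p ^ logn p (w - u))%N.
Proof.
move=> lt_uw lt_w_pn; apply: v_t_assoc_expr t_neq0 t_nonunit _.
have -> : (1 - zeta ^+ w) - (1 - zeta ^+ u) = zeta ^+ u * (1 - zeta ^+ (w - u)).
  by rewrite mulrBr mulr1 -exprD subnKC ?(ltnW lt_uw) // opprB addrC subrKA.
apply: assoc_T_trans (assoc_T_zeta_expl _ _) (assoc_T_1subX_logn _ _).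
  by rewrite subn_gt0.
exact: leq_ltn_trans (leq_subr _ _) lt_w_pn.
Qed.

End PrimitivePrimePowerRoot.
End LocalizedCyclotomicRing.

Definition tau_exponents (p n : nat) : seq nat := [seq j <- iota 0 (p ^ n) | ~~ (p %| j)%N].

Section TauTuple.
Variables (p n : nat) (zeta : algC).
Hypotheses (p_pr : prime p) (n_gt0 : (0 < n)%N) (zeta_prim : (p ^ n)%N.-primitive_root zeta).
Local Notation a := (tau_exponents p n).

Lemma mem_tau_exponents j : (j \in a) = (j < p ^ n)%N && ~~ (p %| j)%N.
Proof. by rewrite mem_filter mem_iota andbC. Qed.

Lemma tau_exponents_nth i : (i < size a)%N ->
  (nth 0%N a i < p ^ n)%N /\ ~~ (p %| nth 0%N a i)%N.
Proof. by move=> /(mem_nth 0%N); rewrite mem_tau_exponents => /andP. Qed.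

Lemma tau_exponents_nth_ltn i k : (i < k)%N -> (k < size a)%N -> (nth 0%N a i < nth 0%N a k)%N.
Proof.
move=> lt_ik lt_k; apply: (sorted_ltn_nth ltn_trans) => //; last by rewrite inE (ltn_trans lt_ik).
by apply: sorted_filter; [exact: ltn_trans | exact: iota_ltn_sorted].
Qed.

Lemma uniq_tau : uniq (tau p n zeta).
Proof.
rewrite map_inj_in_uniq ?filter_uniq ?iota_uniq // => u w.
rewrite !mem_tau_exponents => /andP [lt_u _] /andP [lt_w _] /eqP.
rewrite -subr_eq0 opprB addrC subrKA subr_eq0 eq_sym (eq_prim_root_expr zeta_prim).
by rewrite !modn_small // => /eqP.
Qed.

Lemma in_T_tau i : (i < size (tau p n zeta))%N -> in_T p zeta (tau p n zeta)`_i.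
Proof.
rewrite size_map => lt_i; rewrite (nth_map 0%N) //.
by apply: in_T_sub => //; [exact: in_T1 | exact: in_T_zeta_exp].
Qed.

Lemma sum_v_t_tau j k : (j <= k)%N -> (k < size a)%N ->
  (\sum_(i < j) v_t p zeta ((tau p n zeta)`_k - (tau p n zeta)`_i)%R =
   \sum_(y <- [seq y <- iota 0 (nth 0%N a j) | ~~ (p %| y)]) p ^ logn p (nth 0%N a k - y))%N.
Proof.
move=> le_jk lt_k; have lt_j := leq_ltn_trans le_jk lt_k.
rewrite -take_filter_iota // -sum_take_nth; last exact: ltnW.
apply: eq_bigr => i _; have lt_ik := leq_trans (ltn_ord i) le_jk.
rewrite !(nth_map 0%N) ?(ltn_trans lt_ik) //.
apply: (v_t_1subX_diff p_pr n_gt0 zeta_prim); first exact: tau_exponents_nth_ltn.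
by case: (tau_exponents_nth lt_k).
Qed.

End TauTuple.

Theorem lemma2p6 (p n : nat) (zeta : algC) :
  prime p -> (1 <= n)%N -> (p ^ n)%N.-primitive_root zeta ->
  minimally_ordered p zeta (tau p n zeta).
Proof.
move=> p_pr n_gt0 zeta_prim; split; first exact: uniq_tau.
  exact: in_T_tau.
move=> j k lt_jk; rewrite size_map => lt_k.
rewrite !sum_v_t_tau ?(ltnW lt_jk) ?(ltn_trans lt_jk lt_k) //.
have [_ pj] := tau_exponents_nth (ltn_trans lt_jk lt_k).
have [_ pk] := tau_exponents_nth lt_k.
exact: sum_pfactor_logn_sub_le (tau_exponents_nth_ltn lt_jk lt_k) pj pk.
Qed.
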